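(* Let $U$ be a Hilbert space and $H: U \rightrightarrows U$ a set-valued map with $H^{-1}(0) \neq \emptyset$. For each $i \in \mathbb{N}$ let $\widetilde H_{i+1}: U \rightrightarrows U$ and $M_{i+1}, Z_{i+1} \in \mathcal{L}(U;U)$ with $Z_{i+1}M_{i+1}$ self-adjoint. Let $(u^i)_{i\in\mathbb{N}} \subset U$ satisfy \[ 0 \in \widetilde H_{i+1}(u^{i+1}) + M_{i+1}(u^{i+1}-u^i) \quad (i \in \mathbb{N}). \] Suppose that for every $i \in \mathbb{N}$ there is $\Delta_{i+1} \in \mathbb{R}$ such that for every $q \in \widetilde H_{i+1}(u^{i+1})$, \[ \tfrac{1}{2}\|u^{i+1}-u^i\|_{Z_{i+1}M_{i+1}}^2 + \inf_{u^* \in H^{-1}(0)}\Big( \tfrac12 \|u^{i+1}-u^*\|^2_{Z_{i+1}M_{i+1}} + \langle q, u^{i+1}-u^*\rangle_{Z_{i+1}}\Big) \ge \tfrac12 \operatorname{dist}^2_{Z_{i+2}M_{i+2}}(u^{i+1}, H^{-1}(0)) - \Delta_{i+1}. \] Then for all $N \ge 1$, \[ \tfrac12 \operatorname{dist}^2_{Z_{N+1}M_{N+1}}(u^N, H^{-1}(0)) \le \tfrac12 \operatorname{dist}^2_{Z_1M_1}(u^0, H^{-1}(0)) + \sum_{i=0}^{N-1}\Delta_{i+1}. \]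
   Context: $\mathbb{N}=\{0,1,2,\dots\}$. $\mathcal{L}(U;U)$ denotes bounded linear operators on $U$. For $T \in \mathcal{L}(U;U)$ (not necessarily self-adjoint or positive) write $\langle x, z\rangle_T := \langle Tx, z\rangle$, $\|x\|_T^2 := \langle Tx, x\rangle$, and for $A \subset U$, $\operatorname{dist}^2_T(z, A) := \inf_{u \in A}\|z-u\|_T^2$. $H^{-1}(0) := \{u \in U : 0 \in H(u)\}$. *)

From HB Require Import structures.
From mathcomp Require Import all_boot all_order all_algebra.
From mathcomp Require Import all_classical all_reals all_analysis.
Set Implicit Arguments. Unset Strict Implicit. Unset Printing Implicit Defensive.
Import Order.TTheory GRing.Theory Num.Theory.
Import numFieldNormedType.Exports.
Local Open Scope classical_set_scope.
Local Open Scope ring_scope.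

Definition is_inner_product (R : realType) (U : normedModType R)
  (inner : U -> U -> R) : Prop :=
  [/\ (forall x y, inner x y = inner y x),
      (forall a x y z, inner (a *: x + y) z = a * inner x z + inner y z)
    & (forall x, inner x x = `|x| ^+ 2)].

Definition bounded_linear (R : realType) (U : normedModType R) (T : U -> U) : Prop :=
  (forall a x y, T (a *: x + y) = a *: T x + T y) /\ continuous T.

Definition self_adjoint (R : realType) (U : Type) (inner : U -> U -> R)
  (T : U -> U) : Prop := forall x y, inner (T x) y = inner x (T y).

Definition ipT (R : realType) (U : Type) (inner : U -> U -> R) (T : U -> U)
  (x z : U) : R := inner (T x) z.

Definition normT2 (R : realType) (U : Type) (inner : U -> U -> R) (T : U -> U)
  (x : U) : R := inner (T x) x.

(* dist^2_T(z, A) := inf_{u in A} ||z - u||_T^2 (extended real, may be -oo) *)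
Definition distT2 (R : realType) (U : zmodType) (inner : U -> U -> R)
  (T : U -> U) (z : U) (A : set U) : \bar R :=
  ereal_inf [set (normT2 inner T (z - u))%:E | u in A].

Definition zeros (U : zmodType) (H : U -> set U) : set U := [set u | H u 0].

From HB Require Import structures.
From mathcomp Require Import all_boot all_order all_algebra.
From mathcomp Require Import all_classical all_reals all_analysis.
From mathcomp Require Import lra.
Set Implicit Arguments. Unset Strict Implicit. Unset Printing Implicit Defensive.
Import Order.TTheory GRing.Theory Num.Theory.
Import numFieldNormedType.Exports.
Local Open Scope classical_set_scope.
Local Open Scope ring_scope.

(* Write d_i := 1/2 dist^2_{Z_(i+1) M_(i+1)}(u^i, H^-1(0)).  The iteration
   gives q = -M_(i+1)(u^(i+1) - u^i) in Ht_(i+1)(u^(i+1)), and for this q the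
   three-point identity of the self-adjoint operator Z_(i+1) M_(i+1) turns the
   left-hand side of the descent hypothesis into an infimum over u* of
   1/2 |u^i - u*|^2_{Z_(i+1) M_(i+1)}, i.e. into d_i.  Hence
   d_(i+1) <= d_i + Delta_(i+1), and the claim follows by summation. *)

Section LinearMaps.
Variables (R : pzRingType) (U V : lmodType R) (f : U -> V).
Hypothesis f_linear : forall a x y, f (a *: x + y) = a *: f x + f y.

Lemma linear_funB x y : f (x - y) = f x - f y.
Proof. by rewrite -scaleN1r addrC f_linear scaleN1r addrC. Qed.

Lemma linear_funN x : f (- x) = - f x.
Proof.
have f0 : f 0 = 0 by rewrite -(subrr 0) linear_funB subrr.
by rewrite -sub0r linear_funB f0 sub0r.
Qed.

End LinearMaps.

Lemma linear_fun_comp (R : pzRingType) (U V W : lmodType R)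
    (f : V -> W) (g : U -> V) :
  (forall a x y, f (a *: x + y) = a *: f x + f y) ->
  (forall a x y, g (a *: x + y) = a *: g x + g y) ->
  forall a x y, (f \o g) (a *: x + y) = a *: (f \o g) x + (f \o g) y.
Proof. by move=> f_lin g_lin a x y /=; rewrite g_lin f_lin. Qed.

Section SymmetricBilinear.
Variables (R : realType) (U : lmodType R) (inner : U -> U -> R).
Hypotheses (inner_sym : forall x y, inner x y = inner y x)
  (inner_linear : forall a x y z, inner (a *: x + y) z = a * inner x z + inner y z).

Lemma innerBl x y z : inner (x - y) z = inner x z - inner y z.
Proof. by rewrite -scaleN1r addrC inner_linear mulN1r addrC. Qed.

Lemma innerNl x z : inner (- x) z = - inner x z.
Proof. by rewrite -sub0r innerBl -(subrr x) innerBl subrr sub0r. Qed.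

Lemma innerBr x y z : inner z (x - y) = inner z x - inner z y.
Proof. by rewrite inner_sym innerBl !(inner_sym z). Qed.

Variable A : U -> U.
Hypotheses (A_linear : forall a x y, A (a *: x + y) = a *: A x + A y)
  (A_selfadj : self_adjoint inner A).

Lemma normT2_three_point x y :
  2^-1 * normT2 inner A x + 2^-1 * normT2 inner A y - inner (A x) y =
  2^-1 * normT2 inner A (y - x).
Proof.
rewrite /normT2 (linear_funB A_linear) !innerBl !innerBr (A_selfadj y x) (inner_sym y).
lra.
Qed.

Lemma three_point_inf_le_half_distT2 (S : set U) (v w : U) :
  ((2^-1 * normT2 inner A (w - v))%:E
   + ereal_inf [set (2^-1 * normT2 inner A (w - s) - inner (A (w - v)) (w - s))%:E
               | s in S]
   <= (2^-1)%:E * distT2 inner A v S)%E.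
Proof.
rewrite /distT2 -ereal_inf_pZl ?invr_gt0 ?ltr0n //.
apply/ereal_infP => _ [_ [s Ss <-] <-].
apply: le_trans (leeD2l _ (ereal_inf_lbound _)) _; first by exists s.
have -> : v - s = (w - s) - (w - v) by rewrite opprB [RHS]addrC addrA subrK.
by rewrite -EFinD -EFinM addrA normT2_three_point.
Qed.

End SymmetricBilinear.

Lemma lee_telescope (R : realType) (d : nat -> \bar R) (e : nat -> R) :
  (forall i, (d i.+1 <= d i + (e i)%:E)%E) ->
  forall N, (d N <= d 0%N + (\sum_(i < N) e i)%:E)%E.
Proof.
move=> step; elim=> [|N IH]; first by rewrite big_ord0 adde0.
apply: le_trans (step N) _.
by rewrite big_ord_recr EFinD addeA leeD2r.
Qed.

Theorem theorem3p1 (R : realType) (U : completeNormedModType R)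
  (inner : U -> U -> R) (Hinner : is_inner_product inner)
  (H : U -> set U) (Hne : zeros H !=set0)
  (Ht : nat -> U -> set U) (M Z : nat -> U -> U)
  (HM : forall i, bounded_linear (M i.+1))
  (HZ : forall i, bounded_linear (Z i.+1))
  (HZM : forall i, self_adjoint inner (Z i.+1 \o M i.+1))
  (u : nat -> U)
  (Hiter : forall i, exists q, Ht i.+1 (u i.+1) q /\
                              q + M i.+1 (u i.+1 - u i) = 0)
  (Delta : nat -> R)
  (Hdesc : forall i q, Ht i.+1 (u i.+1) q ->
     ((2^-1 * normT2 inner (Z i.+1 \o M i.+1) (u i.+1 - u i))%:E
      + ereal_inf [set ((2^-1 * normT2 inner (Z i.+1 \o M i.+1) (u i.+1 - us)
                         + ipT inner (Z i.+1) q (u i.+1 - us))%:E) | us in zeros H]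
      >= (2^-1)%:E * distT2 inner (Z i.+2 \o M i.+2) (u i.+1) (zeros H)
         - (Delta i.+1)%:E)%E) :
  forall N : nat, is_true (leq 1 N) ->
    ((2^-1)%:E * distT2 inner (Z N.+1 \o M N.+1) (u N) (zeros H)
     <= (2^-1)%:E * distT2 inner (Z 1%N \o M 1%N) (u 0%N) (zeros H)
        + (\sum_(i < N) Delta i.+1)%:E)%E.
Proof.
move=> N _; have [inner_sym inner_linear _] := Hinner.
pose d i := ((2^-1)%:E * distT2 inner (Z i.+1 \o M i.+1) (u i) (zeros H))%E.
suff step i : (d i.+1 <= d i + (Delta i.+1)%:E)%E by exact: (lee_telescope step N).
have [q [Hq q_step]] := Hiter i.
have [Z_linear _] := HZ i; have [M_linear _] := HM i.
have ZM_linear := linear_fun_comp Z_linear M_linear.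
have ipT_q : ipT inner (Z i.+1) q =
    fun y => - inner ((Z i.+1 \o M i.+1) (u i.+1 - u i)) y.
  apply: funext => y; move/eqP: q_step; rewrite addr_eq0 => /eqP ->.
  by rewrite /ipT (linear_funN Z_linear) innerNl.
rewrite -leeBlDr //; apply: le_trans (Hdesc i q Hq) _; rewrite ipT_q /d.
exact: (three_point_inf_le_half_distT2 inner_sym inner_linear ZM_linear (HZM i)).
Qed.
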